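(* For any $U\in(0,1]$, let $L=\sqrt{\frac{C}{C/U^2+(g(U)-1)/\epsilon^2}}$. Then $L\le\min\{\lambda^*,U\}$.
   Context: $\epsilon\in(0,1)$, $K\ge1$, $C>K$, $g:[0,1]\to[1,K]$ non-decreasing, $f(\lambda)=\frac{C}{\lambda^2}+\frac{g(\lambda)}{\epsilon^2}$, and $\lambda^*\in(0,1]$ a minimizer of $f$ over $[0,1]$. *)

From mathcomp Require Import all_boot all_order all_algebra.
From mathcomp Require Import reals.
Set Implicit Arguments. Unset Strict Implicit. Unset Printing Implicit Defensive.
Import Order.TTheory GRing.Theory Num.Theory.
Local Open Scope ring_scope.

Definition fobj (R : realType) (C eps : R) (g : R -> R) (lam : R) : R :=
  C / lam ^+ 2 + g lam / eps ^+ 2.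

(* Write D for the denominator, so that D = f(U) - 1/eps^2.  As g >= 1 on
   [0, 1], D >= C / U^2, and minimality of lamstar gives
   C / lamstar^2 + 1/eps^2 <= f(lamstar) <= f(U), i.e. D >= C / lamstar^2.
   Inverting both comparisons bounds L by U and by lamstar. *)
From mathcomp Require Import all_boot all_order all_algebra.
From mathcomp Require Import reals.
Import Order.TTheory GRing.Theory Num.Theory.
Local Open Scope ring_scope.

Lemma sqrt_div_le (R : rcfType) (C D x : R) :
  0 < x -> 0 < D -> C / x ^+ 2 <= D -> Num.sqrt (C / D) <= x.
Proof.
move=> x_gt0 D_gt0 le_CD.
rewrite -[leRHS]gtr0_norm // -sqrtr_sqr; apply: ler_wsqrtr.
by rewrite ler_pdivrMr // mulrC -ler_pdivrMr ?exprn_gt0.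
Qed.

Lemma fobj_subV_ge (R : realType) (C eps : R) (g : R -> R) (lam : R) :
  1 <= g lam -> C / lam ^+ 2 <= fobj C eps g lam - eps ^-2.
Proof.
move=> g_ge1; rewrite /fobj -addrA lerDl subr_ge0 -[leLHS]mul1r.
by rewrite ler_wpM2r // invr_ge0 sqr_ge0.
Qed.

Theorem lemmaB4 (R : realType) (eps K C : R) (g : R -> R) (lamstar : R)
  (heps : 0 < eps < 1) (hK : 1 <= K) (hCK : K < C)
  (hg : forall x : R, 0 <= x <= 1 -> 1 <= g x <= K)
  (hmono : forall x y : R, 0 <= x -> x <= y -> y <= 1 -> g x <= g y)
  (hlam : 0 < lamstar <= 1)
  (hmin : forall x : R, 0 < x <= 1 -> fobj C eps g lamstar <= fobj C eps g x)
  (U : R) (hU : 0 < U <= 1) :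
  Num.sqrt (C / (C / U ^+ 2 + (g U - 1) / eps ^+ 2)) <= Num.min lamstar U.
Proof.
have /andP[lam_gt0 lam_le1] := hlam; have /andP[U_gt0 U_le1] := hU.
have C_gt0 : 0 < C by rewrite (le_lt_trans _ hCK) // (le_trans _ hK).
have /andP[gU_ge1 _] := hg U (introT andP (conj (ltW U_gt0) U_le1)).
have /andP[glam_ge1 _] := hg lamstar (introT andP (conj (ltW lam_gt0) lam_le1)).
set D := C / U ^+ 2 + _.
have le_U_D : C / U ^+ 2 <= D.
  by rewrite lerDl divr_ge0 ?sqr_ge0 ?subr_ge0.
have le_lam_D : C / lamstar ^+ 2 <= D.
  have -> : D = fobj C eps g U - eps ^-2 by rewrite /D mulrBl mul1r addrA.
  by rewrite (le_trans (fobj_subV_ge _ C eps _ _ glam_ge1)) // lerD2r hmin.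
have D_gt0 : 0 < D by rewrite (lt_le_trans _ le_U_D) ?divr_gt0 ?exprn_gt0.
by rewrite le_min !sqrt_div_le.
Qed.
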